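(* Let $R$ be an affine algebra over a field $K$ with no zero divisors which is not amenable. Then there exists a finite-dimensional $K$-subspace $Z\subseteq R$ such that for every nonzero finite-dimensional $K$-subspace $V\subseteq R$, $$\frac{\dim_K(VZ)}{\dim_K(V)}>2.$$
   Context: An affine algebra is a finitely generated associative algebra over $K$, not necessarily unital. For subspaces $V,Z$, $VZ$ denotes the $K$-span of all products $vz$, $v\in V$, $z\in Z$. $R$ is amenable if there exist finite-dimensional $K$-subspaces $W_1\subseteq W_2\subseteq\cdots$ with $\bigcup_nW_n=R$ such that for every $r\in R$, $\lim_{n\to\infty}\dim_K(W_nr+W_n)/\dim_K(W_n)=1$. *)

(* Non-unital associative K-algebras are modelled as a
   K-vector space R (lmodType K) together with a bilinear associative
   multiplication mul : R -> R -> R. *)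
From HB Require Import structures.
From mathcomp Require Import all_boot all_order all_algebra.
From Stdlib Require Import ClassicalEpsilon.
Set Implicit Arguments. Unset Strict Implicit. Unset Printing Implicit Defensive.
Import Order.TTheory GRing.Theory Num.Theory.
Local Open Scope ring_scope.

Section Defs.
Variables (K : fieldType) (R : lmodType K).

Definition is_algebra_mul (mul : R -> R -> R) : Prop :=
  [/\ forall x y z, mul x (mul y z) = mul (mul x y) z,
      forall a x y z, mul (a *: x + y) z = a *: mul x z + mul y z
    & forall a x y z, mul z (a *: x + y) = a *: mul z x + mul z y].

Inductive in_subalg (mul : R -> R -> R) (g : seq R) : R -> Prop :=
  | SA_gen x : x \in g -> in_subalg mul g x
  | SA_zero : in_subalg mul g 0
  | SA_add x y : in_subalg mul g x -> in_subalg mul g y -> in_subalg mul g (x + y)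
  | SA_scale a x : in_subalg mul g x -> in_subalg mul g (a *: x)
  | SA_mul x y : in_subalg mul g x -> in_subalg mul g y -> in_subalg mul g (mul x y).

Definition affine (mul : R -> R -> R) : Prop :=
  exists g : seq R, forall x, in_subalg mul g x.

Definition no_zero_divisors (mul : R -> R -> R) : Prop :=
  forall x y, mul x y = 0 -> x = 0 \/ y = 0.

(* K-subspaces of R are represented as predicates R -> Prop *)
Definition in_span (s : seq R) (x : R) : Prop :=
  exists c : 'I_(size s) -> K, x = \sum_(i < size s) c i *: s`_i.

Definition free_seq (s : seq R) : Prop :=
  forall c : 'I_(size s) -> K,
    \sum_(i < size s) c i *: s`_i = 0 -> forall i, c i = 0.

Definition fdsub (V : R -> Prop) : Prop :=
  exists s : seq R, forall x, V x <-> in_span s x.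

Definition has_dim (V : R -> Prop) (n : nat) : Prop :=
  exists s : seq R, [/\ size s = n, free_seq s & forall x, V x <-> in_span s x].

(* dim_K V (meaningful for finite-dimensional subspaces V) *)
Definition fdim (V : R -> Prop) : nat :=
  epsilon (inhabits 0%N) (fun n => has_dim V n).

Definition prodsp (mul : R -> R -> R) (V Z : R -> Prop) : R -> Prop :=
  fun x => exists s : seq (K * (R * R)),
    (forall p, p \in s -> V p.2.1 /\ Z p.2.2) /\
    x = \sum_(p <- s) p.1 *: mul p.2.1 p.2.2.

Definition rmulsp (mul : R -> R -> R) (W : R -> Prop) (r : R) : R -> Prop :=
  fun x => exists w, W w /\ x = mul w r.

Definition addsp (A B : R -> Prop) : R -> Prop :=
  fun x => exists a b, [/\ A a, B b & x = a + b].

(* amenability: an exhausting increasing chain of finite-dimensional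
   subspaces W_n with dim(W_n r + W_n)/dim(W_n) -> 1 for every r.
   The limit is written without division:
   |dim(W_n r + W_n) - dim W_n| <= eps * dim W_n eventually
   (equivalent to |ratio - 1| <= eps whenever dim W_n > 0). *)
Definition amenable (mul : R -> R -> R) : Prop :=
  exists W : nat -> (R -> Prop),
    [/\ forall n, fdsub (W n),
        forall n x, W n x -> W n.+1 x,
        forall x, exists n, W n x
      & forall (r : R) (eps : rat), 0 < eps ->
          exists N : nat, forall n : nat, (N <= n)%N ->
            `| (fdim (addsp (rmulsp mul (W n) r) (W n)))%:R
               - (fdim (W n))%:R | <= eps * (fdim (W n))%:R].

End Defs.

From HB Require Import structures.
From mathcomp Require Import all_boot all_order all_algebra.
From mathcomp Require Import zify.
From Stdlib Require Import ClassicalEpsilon Classical.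
Set Implicit Arguments. Unset Strict Implicit. Unset Printing Implicit Defensive.
Import Order.TTheory GRing.Theory Num.Theory.
Local Open Scope ring_scope.

(* If the conclusion fails, then for every finite-dimensional Z some nonzero V
   has dim VZ <= 2 dim V.  Apply this to Z = T^(m+1), where T contains a
   nonzero z0 (so that the dimensions a_j = dim V T^j are nondecreasing), the
   products z0 r for the elements r to be tested, and a large free family
   (which forces dim V to be large).  Since a_(m+1) <= 2 a_0, some step has
   a_(j+1) <= (1 + 1/(m+1)) a_j, and W = V T^j z0 then satisfies
   dim (W + W r) <= (1 + 1/(m+1)) dim W for the tested r.  Enlarging W by a
   fixed finite-dimensional space of comparatively small dimension keeps this
   almost invariance, and chaining such spaces along the generating
   filtration of R yields a Folner exhaustion, i.e. R is amenable. *)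

Section Span.
Variables (K : fieldType) (R : lmodType K).
Implicit Types (s t : seq R) (x y : R).
Local Notation span := (@in_span K R).

Lemma span_ind s (P : R -> Prop) :
  P 0 -> (forall x y, P x -> P y -> P (x + y)) -> (forall a x, P x -> P (a *: x)) ->
  (forall x, x \in s -> P x) -> forall x, span s x -> P x.
Proof.
move=> P0 PD PZ Ps x [c ->]; apply: (big_ind P) => // i _.
exact/PZ/Ps/mem_nth.
Qed.

Lemma span0 s : span s 0.
Proof. by exists (fun _ => 0); rewrite big1 // => i _; rewrite scale0r. Qed.

Lemma spanD s x y : span s x -> span s y -> span s (x + y).
Proof.
move=> [c ->] [d ->]; exists (fun i => c i + d i).
by rewrite -big_split /=; apply: eq_bigr => i _; rewrite scalerDl.
Qed.

Lemma spanZ s a x : span s x -> span s (a *: x).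
Proof.
move=> [c ->]; exists (fun i => a * c i).
by rewrite scaler_sumr; apply: eq_bigr => i _; rewrite scalerA.
Qed.

Lemma span_nth s (i : 'I_(size s)) : span s s`_i.
Proof.
exists (fun j => (j == i)%:R); rewrite (bigD1 i) //= eqxx scale1r big1 ?addr0 //.
by move=> j /negbTE ->; rewrite scale0r.
Qed.

Lemma span_mem s x : x \in s -> span s x.
Proof.
move=> xs; have xs' : (index x s < size s)%N by rewrite index_mem.
by have := span_nth (Ordinal xs'); rewrite /= nth_index.
Qed.

Lemma span_nil x : span [::] x -> x = 0.
Proof. by move=> [c ->]; rewrite big_ord0. Qed.

Definition subspan s t := forall x, span s x -> span t x.

Lemma subspan_mem s t : (forall x, x \in s -> span t x) -> subspan s t.
Proof. by move=> st; apply: span_ind => //; [apply: span0|apply: spanD|apply: spanZ]. Qed.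

Lemma subspan_trans s t u : subspan s t -> subspan t u -> subspan s u.
Proof. by move=> st tu x /st /tu. Qed.

Lemma subspan_catl s t : subspan s (s ++ t).
Proof. by apply: subspan_mem => x xs; apply: span_mem; rewrite mem_cat xs. Qed.

Lemma subspan_catr s t : subspan t (s ++ t).
Proof. by apply: subspan_mem => x xt; apply: span_mem; rewrite mem_cat xt orbT. Qed.

Lemma span_cat s t z :
  span (s ++ t) z <-> exists x y, [/\ span s x, span t y & z = x + y].
Proof.
split; last by move=> [x [y [sx ty ->]]]; apply: spanD; [apply: subspan_catl|apply: subspan_catr].
move: z; apply: span_ind.
- by exists 0, 0; rewrite addr0; split => //; apply: span0.
- move=> _ _ [x [y [sx ty ->]]] [x' [y' [sx' ty' ->]]].
  by exists (x + x'), (y + y'); rewrite addrACA; split => //; apply: spanD.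
- move=> a _ [x [y [sx ty ->]]].
  by exists (a *: x), (a *: y); rewrite scalerDr; split => //; apply: spanZ.
move=> z; rewrite mem_cat => /orP [zs|zt].
  by exists z, 0; rewrite addr0; split; [apply: span_mem|apply: span0|].
by exists 0, z; rewrite add0r; split; [apply: span0|apply: span_mem|].
Qed.

Lemma freeP s : free_seq s <->
  (forall c : nat -> K, \sum_(i < size s) c i *: s`_i = 0 ->
     forall i, (i < size s)%N -> c i = 0).
Proof.
split=> [fs c sum0 i ilt|fs c sum0 i]; first exact: (fs (fun j => c (val j)) sum0 (Ordinal ilt)).
pose c' n := oapp c 0 (insub n : option 'I_(size s)).
have c'E (j : 'I_(size s)) : c' j = c j by rewrite /c' valK.
rewrite -c'E; apply: fs (ltn_ord i); rewrite -[RHS]sum0.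
by apply: eq_bigr => j _; rewrite c'E.
Qed.

Lemma free_nil : free_seq (R := R) [::].
Proof. by move=> c _ []. Qed.

Lemma free_cons x s : ~ span s x -> free_seq s -> free_seq (x :: s).
Proof.
move=> sx fs c; rewrite big_ord_recl /= => sum0.
have c0 : c ord0 = 0.
  apply: contra_not_eq sx => c0_neq0.
  exists (fun i => - (c ord0)^-1 * c (lift ord0 i)).
  apply: (scalerI c0_neq0); rewrite scaler_sumr.
  under eq_bigr => i _ do rewrite scalerA mulrA mulrN mulfV // mulN1r scaleNr.
  by rewrite sumrN; apply/eqP; rewrite -addr_eq0 sum0.
rewrite c0 scale0r add0r in sum0.
by move=> i; case: (unliftP ord0 i) => [j ->|->] //; apply: (fs _ sum0).
Qed.

Lemma basis_ex s : exists b, [/\ free_seq b, subspan b s & subspan s b].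
Proof.
elim: s => [|x s [b [fb bs sb]]]; first by exists [::]; split => //; apply: free_nil.
have s_xs : subspan s (x :: s) by apply: (@subspan_catr [:: x]).
have x_xs : span (x :: s) x by apply/span_mem/mem_head.
have cons_sub (u v : seq R) : span v x -> subspan u v -> subspan (x :: u) v.
  move=> vx uv; apply: subspan_mem => y; rewrite inE => /orP [/eqP -> //|yu].
  exact/uv/span_mem.
case: (classic (span b x)) => bx.
  by exists b; split => //; [apply: subspan_trans s_xs|apply: cons_sub].
exists (x :: b); split; first exact: free_cons.
  exact: cons_sub x_xs (subspan_trans bs s_xs).
apply: cons_sub; first exact/span_mem/mem_head.
exact: subspan_trans sb (@subspan_catr [:: x] b).
Qed.

Lemma leq_size_free s t : free_seq s -> subspan s t -> (size s <= size t)%N.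
Proof.
move=> fs st.
have coords (i : 'I_(size s)) : exists c : 'I_(size t) -> K,
    s`_i = \sum_(j < size t) c j *: t`_j by apply/st/span_nth.
pose c i := proj1_sig (constructive_indefinite_description _ (coords i)).
have cE (i : 'I_(size s)) : s`_i = \sum_(j < size t) c i j *: t`_j.
  by rewrite /c; case: constructive_indefinite_description.
pose A := \matrix_(i < size s, j < size t) c i j.
have A_inj (u : 'rV_(size s)) : u *m A = 0 -> u = 0.
  move=> uA0; apply/matrixP => a i; rewrite (ord1 a) mxE.
  apply: (fs (fun i => u 0 i)).
  transitivity (\sum_(j < size t) (u *m A) 0 j *: t`_j); last first.
    by rewrite uA0 big1 // => j _; rewrite mxE scale0r.
  under eq_bigr => i0 _ do rewrite cE scaler_sumr.
  rewrite exchange_big /=; apply: eq_bigr => j _.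
  rewrite !mxE scaler_suml; apply: eq_bigr => i0 _.
  by rewrite mxE scalerA.
have : row_free A.
  rewrite -kermx_eq0; apply/eqP/row_matrixP => i.
  by rewrite row0; apply: A_inj; apply/eqP; rewrite -sub_kermx; apply: row_sub.
by move/eqP => <-; apply: rank_leq_col.
Qed.

Lemma has_dim_uniq (V : R -> Prop) n m : has_dim V n -> has_dim V m -> n = m.
Proof.
move=> [s [<- fs Vs]] [t [<- ft Vt]].
apply/eqP; rewrite eqn_leq; apply/andP; split; apply: leq_size_free => // x.
  by move/Vs/Vt.
by move/Vt/Vs.
Qed.

Lemma fdimE (V : R -> Prop) n : has_dim V n -> fdim V = n.
Proof. by move=> Vn; apply: (has_dim_uniq _ Vn); apply: epsilon_spec; exists n. Qed.

Definition rank s := fdim (span s).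

Lemma has_dim_rank (V : R -> Prop) s : (forall x, V x <-> span s x) -> has_dim V (rank s).
Proof.
move=> Vs; have [b [fb bs sb]] := basis_ex s.
have bE x : span b x <-> span s x by split; [apply: bs|apply: sb].
have -> : rank s = size b by apply: fdimE; exists b; split => // x; apply: iff_sym.
by exists b; split => // x; apply: iff_trans (Vs x) (iff_sym (bE x)).
Qed.

Lemma fdim_span (V : R -> Prop) s : (forall x, V x <-> span s x) -> fdim V = rank s.
Proof. by move/has_dim_rank/fdimE. Qed.

Lemma rank_basis s :
  exists b, [/\ free_seq b, size b = rank s & forall x, span b x <-> span s x].
Proof.
have [b [bs fb sb]] := @has_dim_rank (span s) s (fun x => iff_refl _).
by exists b; split => // x; apply: iff_sym.
Qed.

Lemma rank_le s t : subspan s t -> (rank s <= rank t)%N.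
Proof.
move=> st; have [a [fa <- aE]] := rank_basis s; have [b [_ <- bE]] := rank_basis t.
by apply: leq_size_free fa _ => x /aE /st /bE.
Qed.

Lemma rank_free s : free_seq s -> rank s = size s.
Proof. by move=> fs; apply: fdimE; exists s. Qed.

Lemma rank_size s : (rank s <= size s)%N.
Proof. by have [b [fb <- bE]] := rank_basis s; apply: leq_size_free fb _ => x /bE. Qed.

Lemma rank_cat s t : (rank (s ++ t) <= rank s + rank t)%N.
Proof.
have [a [_ <- aE]] := rank_basis s; have [b [_ <- bE]] := rank_basis t.
rewrite -size_cat; apply: leq_trans (rank_size _); apply: rank_le.
move=> z /span_cat [x [y [sx ty ->]]].
by apply/span_cat; exists x, y; split => //; [apply/aE|apply/bE].
Qed.

Lemma rank_gt0 s x : span s x -> x <> 0 -> (0 < rank s)%N.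
Proof.
move=> sx x_neq0; have free_x : free_seq [:: x].
  by apply: free_cons (free_nil) => /span_nil.
rewrite -[1%N]/(size [:: x]) -(rank_free free_x); apply: rank_le.
by apply: subspan_mem => y; rewrite inE => /eqP ->.
Qed.

Lemma exists_free_of_size n :
  (forall s, exists x, ~ span s x) -> exists2 P : seq R, free_seq P & size P = n.
Proof.
move=> infdim; elim: n => [|n [P fP <-]]; first by exists [::]; first apply: free_nil.
by have [x Px] := infdim P; exists (x :: P); first apply: free_cons.
Qed.

End Span.

Section LinearImage.
Variables (K : fieldType) (R R' : lmodType K) (f : {linear R -> R'}).
Implicit Types (s : seq R) (x : R).
Local Notation span := (@in_span K _).

Lemma span_map s x : span s x -> span (map f s) (f x).
Proof.
move: x; apply: span_ind.
- by rewrite linear0; apply: span0.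
- by move=> x y sx sy; rewrite linearD; apply: spanD.
- by move=> a x sx; rewrite linearZ; apply: spanZ.
by move=> x xs; apply/span_mem/map_f.
Qed.

Lemma span_map_inv s y : span (map f s) y -> exists2 x, span s x & y = f x.
Proof.
move: y; apply: span_ind.
- by exists 0; [apply: span0|rewrite linear0].
- by move=> _ _ [x sx ->] [y sy ->]; exists (x + y); [apply: spanD|rewrite linearD].
- by move=> a _ [x sx ->]; exists (a *: x); [apply: spanZ|rewrite linearZ].
by move=> _ /mapP [x xs ->]; exists x => //; apply: span_mem.
Qed.

Lemma rank_map_le s : (rank (map f s) <= rank s)%N.
Proof.
have [b [_ <- bE]] := rank_basis s; rewrite -(size_map f); apply: leq_trans (rank_size _).
by apply: rank_le => _ /span_map_inv [x /bE bx ->]; apply: span_map.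
Qed.

Hypothesis f_ker0 : forall x, f x = 0 -> x = 0.

Lemma free_map s : free_seq s -> free_seq (map f s).
Proof.
move=> /freeP fs; apply/freeP => c; rewrite size_map => sum0 i ilt.
apply: fs ilt; apply: f_ker0; rewrite linear_sum -[RHS]sum0.
by apply: eq_bigr => j _; rewrite linearZ (nth_map 0).
Qed.

Lemma rank_map s : rank (map f s) = rank s.
Proof.
apply/eqP; rewrite eqn_leq rank_map_le /=.
have [b [fb <- bE]] := rank_basis s.
rewrite -(size_map f) -(rank_free (free_map fb)).
by apply: rank_le => _ /span_map_inv [x /bE sx ->]; apply: span_map.
Qed.

End LinearImage.

Section Algebra.
Variables (K : fieldType) (R : lmodType K) (mul : R -> R -> R).
Hypothesis Halg : is_algebra_mul mul.
Implicit Types (t u v w : seq R) (x y z : R).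
Local Notation span := (@in_span K R).
Local Notation rank := (@rank K R).

Definition mulr_by z x := mul x z.

Lemma mulr_by_linear z : linear (mulr_by z).
Proof. by case: Halg => _ mulDl _ a x y; apply: mulDl. Qed.

Lemma mul_linear x : linear (mul x).
Proof. by case: Halg => _ _ mulDr a y z; apply: mulDr. Qed.

HB.instance Definition _ z := GRing.isLinear.Build K R R *:%R (mulr_by z) (mulr_by_linear z).
HB.instance Definition _ x := GRing.isLinear.Build K R R *:%R (mul x) (mul_linear x).

Lemma mulA x y z : mul x (mul y z) = mul (mul x y) z.
Proof. by case: Halg. Qed.

Definition mulseq v t := [seq mul x y | x <- v, y <- t].

Lemma span_mulseq v t x y : span v x -> span t y -> span (mulseq v t) (mul x y).
Proof.
move=> vx ty; move: x vx; apply: (span_ind (P := fun x => span _ (mulr_by y x))).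
- by rewrite linear0; apply: span0.
- by move=> x x' sx sx'; rewrite linearD; apply: spanD.
- by move=> a x sx; rewrite linearZ; apply: spanZ.
move=> x xv; move: y ty; apply: (span_ind (P := fun y => span _ (mul x y))).
- by rewrite linear0; apply: span0.
- by move=> y y' sy sy'; rewrite linearD; apply: spanD.
- by move=> a y sy; rewrite linearZ; apply: spanZ.
by move=> y yt; apply/span_mem/allpairs_f.
Qed.

Lemma subspan_mulseq v v' t t' :
  subspan v v' -> subspan t t' -> subspan (mulseq v t) (mulseq v' t').
Proof.
move=> vv' tt'; apply: subspan_mem => _ /allpairsP [[x y] [/= xv yt ->]].
by apply: span_mulseq; [apply/vv'/span_mem|apply/tt'/span_mem].
Qed.

Lemma span_mulseqA v t u x :
  span (mulseq v (mulseq t u)) x <-> span (mulseq (mulseq v t) u) x.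
Proof.
split; move: x; apply: subspan_mem => _ /allpairsP [[x yz] [/= xv yzt ->]].
  move: yzt => /allpairsP [[y z] [/= yt zu ->]].
  by rewrite mulA; apply/span_mem/allpairs_f => //; apply: allpairs_f.
move: xv => /allpairsP [[x' y] [/= xv yt ->]].
by rewrite -mulA; apply/span_mem/allpairs_f => //; apply: allpairs_f.
Qed.

Lemma prodsp_span (V : R -> Prop) v t : (forall x, V x <-> span v x) ->
  forall x, prodsp mul V (span t) x <-> span (mulseq v t) x.
Proof.
move=> Vv x; split.
  move=> [ps [ps_in ->]]; elim: ps ps_in => [|p ps IH] ps_in.
    by rewrite big_nil; apply: span0.
  rewrite big_cons; apply: spanD; last by apply: IH => q qs; apply/ps_in/mem_behead.
  by have [/Vv Vp tp] := ps_in p (mem_head _ _); apply/spanZ/span_mulseq.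
move: x; apply: span_ind.
- by exists [::]; rewrite big_nil.
- move=> _ _ [ps [ps_in ->]] [qs [qs_in ->]]; exists (ps ++ qs); rewrite big_cat.
  by split => // p; rewrite mem_cat => /orP [/ps_in|/qs_in].
- move=> a _ [ps [ps_in ->]]; exists [seq (a * p.1, p.2) | p <- ps]; split.
    by move=> _ /mapP [p /ps_in ? ->].
  by rewrite big_map scaler_sumr; apply: eq_bigr => p _; rewrite scalerA.
move=> _ /allpairsP [[x y] [/= xv yt ->]].
exists [:: (1, (x, y))]; rewrite big_seq1 scale1r; split => // p.
by rewrite inE => /eqP -> /=; split; [apply/Vv/span_mem|apply: span_mem].
Qed.

Lemma addsp_rmulsp_span w r x :
  addsp (rmulsp mul (span w) r) (span w) x <-> span (map (mulr_by r) w ++ w) x.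
Proof.
rewrite span_cat; split=> [[y [z [[y' [wy' ->]] wz ->]]]|[y [z [/span_map_inv [y' wy' ->] wz ->]]]].
  by exists (mulr_by r y'), z; split => //; apply: span_map.
by exists (mulr_by r y'), z; split => //; exists y'.
Qed.

(* [mulpow v t k] is v t^k, so the power t^(k+1) is [mulpow t t k]. *)
Fixpoint mulpow v t k := if k is k.+1 then mulseq (mulpow v t k) t else v.

Lemma span_mulpowS v t k x : span (mulseq v (mulpow t t k)) x <-> span (mulpow v t k.+1) x.
Proof.
elim: k x => [//|k IH] x; rewrite [mulpow v t _]/= span_mulseqA.
by split; apply: subspan_mulseq => // y; [move/IH|move/IH].
Qed.

Fixpoint subalg_filt g n :=
  if n is n.+1 then subalg_filt g n ++ mulseq (subalg_filt g n) (subalg_filt g n) else g.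

Lemma subalg_filt_mono g n k : (n <= k)%N -> subspan (subalg_filt g n) (subalg_filt g k).
Proof.
move=> /subnK <-; elim: (k - n)%N => [//|d IH].
by rewrite addSn; apply: (subspan_trans IH); apply: subspan_catl.
Qed.

Lemma subalg_filt_exhaust g x : in_subalg mul g x -> exists n, span (subalg_filt g n) x.
Proof.
have maxl n1 n2 : subspan (subalg_filt g n1) (subalg_filt g (maxn n1 n2)).
  exact/subalg_filt_mono/leq_maxl.
have maxr n1 n2 : subspan (subalg_filt g n2) (subalg_filt g (maxn n1 n2)).
  exact/subalg_filt_mono/leq_maxr.
elim=> {x} [x xg||x y _ [n1 x1] _ [n2 y2]|a x _ [n xn]|x y _ [n1 x1] _ [n2 y2]].
- by exists 0%N; apply: span_mem.
- by exists 0%N; apply: span0.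
- by exists (maxn n1 n2); apply: spanD; [apply: maxl|apply: maxr].
- by exists n; apply: spanZ.
exists (maxn n1 n2).+1; apply: subspan_catr.
by apply: span_mulseq; [apply: maxl|apply: maxr].
Qed.

Definition folner rs m w := forall r, span rs r ->
  (m.+1 * rank (map (mulr_by r) w ++ w) <= m.+2 * rank w)%N.

Definition small_doubling := forall t, exists2 v,
  (exists2 x, span v x & x <> 0) & (rank (mulseq v t) <= 2 * rank v)%N.

Hypothesis Hdom : no_zero_divisors mul.

Lemma mul_eq0l z x : z <> 0 -> mul x z = 0 -> x = 0.
Proof. by move=> z_neq0 /Hdom []. Qed.

Lemma mul_eq0r z x : z <> 0 -> mul z x = 0 -> x = 0.
Proof. by move=> z_neq0 /Hdom []. Qed.

Lemma rank_mulr_by_le r w : (rank (map (mulr_by r) w) <= rank w)%N.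
Proof. exact: rank_map_le. Qed.

Lemma rank_mulr_by z w : z <> 0 -> rank (map (mulr_by z) w) = rank w.
Proof. by move=> z_neq0; apply: rank_map => x; apply: mul_eq0l. Qed.

Lemma rank_mulseq_gel v t z : z \in t -> z <> 0 -> (rank v <= rank (mulseq v t))%N.
Proof.
move=> zt z_neq0; rewrite -(rank_mulr_by v z_neq0).
by apply: rank_le; apply: subspan_mem => _ /mapP [x xv ->]; apply/span_mem/allpairs_f.
Qed.

Lemma rank_mulseq_ger v t x : span v x -> x <> 0 -> (rank t <= rank (mulseq v t))%N.
Proof.
move=> vx x_neq0; rewrite -(rank_map (f := mul x)) => [|y]; last exact: mul_eq0r.
by apply: rank_le; apply: subspan_mem => _ /mapP [y yt ->]; apply/span_mulseq/span_mem.
Qed.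

End Algebra.

Lemma doubling_slow_step (a : nat -> nat) m :
  (a m.+1 <= 2 * a 0)%N -> exists2 j, (j <= m)%N & (m.+1 * a j.+1 <= m.+2 * a j)%N.
Proof.
move=> a_top; apply: NNPP => no_slow_step.
have fast j : (j <= m)%N -> (m.+2 * a j < m.+1 * a j.+1)%N.
  by move=> jm; rewrite ltnNge; apply/negP => slow; apply: no_slow_step; exists j.
have growth k : (k <= m.+1)%N -> (m.+1 * a 0 + k * (a 0).+1 <= m.+1 * a k)%N.
  elim: k => [|k IH] km; first by rewrite addn0.
  have a0k : (a 0 <= a k)%N.
    by rewrite -(leq_pmul2l (ltn0Sn m)); apply: leq_trans (IH (ltnW km)); apply: leq_addr.
  by have := IH (ltnW km); have := fast k km; nia.
by have := growth m.+1 (leqnn _); nia.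
Qed.

Section Folner.
Variables (K : fieldType) (R : lmodType K) (mul : R -> R -> R).
Hypotheses (Halg : is_algebra_mul mul) (Hdom : no_zero_divisors mul).
Hypothesis Hsd : small_doubling mul.
Implicit Types (s t v w rs : seq R).
Local Notation span := (@in_span K R).
Local Notation rank := (@rank K R).
Local Notation mulseq := (mulseq mul).
Local Notation mulpow := (mulpow mul).
Local Notation mulr_by := (mulr_by mul).

Lemma almost_invariant rs m D : (forall s, exists x, ~ span s x) ->
  exists2 w, (D <= rank w)%N & (m.+1 * rank (w ++ mulseq w rs) <= m.+2 * rank w)%N.
Proof.
move=> infdim; have [z0 z0_neq0] : exists z0 : R, z0 <> 0.
  have [z0 z0_out] := infdim [::]; exists z0 => z0_eq0.
  by apply: z0_out; rewrite z0_eq0; apply: span0.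
have [P freeP sizeP] := exists_free_of_size (2 * D) infdim.
pose t := z0 :: map (mul z0) rs ++ P.
have [v [x0 vx0 x0_neq0] doubling] := Hsd (mulpow t t m).
pose a j := rank (mulpow v t j).
have a_mono : {homo a : i j / (i <= j)%N}.
  apply: homo_leq => [//|j i k|j]; first exact: leq_trans.
  exact: (rank_mulseq_gel Halg Hdom _ (mem_head _ _) z0_neq0).
have a_top : (a m.+1 <= 2 * a 0)%N.
  by rewrite /a -(fdim_span (span_mulpowS Halg _ _ _)); apply: doubling.
have a_1 : (2 * D <= a 1)%N.
  rewrite -sizeP -(rank_free freeP); apply: leq_trans (rank_mulseq_ger Halg Hdom _ vx0 x0_neq0).
  by apply: rank_le; apply: subspan_mem => y yP; apply: span_mem; rewrite inE mem_cat yP !orbT.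
have [j jm slow] := doubling_slow_step a_top.
exists (map (mulr_by z0) (mulpow v t j)); rewrite rank_mulr_by // -/(a j).
  by have := a_mono _ _ (leq0n j); have := a_mono 1%N m.+1 isT; lia.
apply: leq_trans slow; rewrite leq_pmul2l //; apply: rank_le; apply: subspan_mem => x.
rewrite mem_cat => /orP [/mapP [y vy ->]|/allpairsP [[_ r] [/= /mapP [y vy ->] rs_r ->]]].
  by apply/span_mem/allpairs_f/mem_head.
rewrite /mulr_by -(mulA Halg); apply/span_mem; apply: allpairs_f => //.
by rewrite inE mem_cat map_f ?orbT.
Qed.

Lemma folner_extension rs a m : exists2 w, subspan a w & folner mul rs m w.
Proof.
case: (classic (exists s, forall x, span s x)) => [[s full]|not_findim].
  exists s => [x _|r _]; first exact: full.
  have : (rank (map (mulr_by r) s ++ s) <= rank s)%N by apply: rank_le => x _; apply: full.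
  by nia.
have infdim s : exists x, ~ span s x.
  by apply: not_all_ex_not => full; apply: not_findim; exists s.
have [w big w_inv] := almost_invariant rs (2 * m + 1) (4 * m.+1 * rank a) infdim.
exists (w ++ a) => [|r rs_r]; first exact: subspan_catr.
have split_r : (rank (map (mulr_by r) (w ++ a) ++ w ++ a)
    <= rank (map (mulr_by r) w ++ w) + rank (map (mulr_by r) a ++ a))%N.
  apply: leq_trans (rank_cat _ _); apply: rank_le; apply: subspan_mem => x.
  rewrite map_cat !mem_cat => x_in; apply: span_mem; rewrite !mem_cat.
  by case/orP: x_in => [/orP [] | /orP []] ->; rewrite ?orbT.
have w_r : (rank (map (mulr_by r) w ++ w) <= rank (w ++ mulseq w rs))%N.
  apply: rank_le; apply: subspan_mem => x; rewrite mem_cat => /orP [/mapP [y wy ->]|wx].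
    by apply: subspan_catr; apply: (span_mulseq Halg) rs_r; apply: span_mem.
  by apply/subspan_catl/span_mem.
have a_r : (rank (map (mulr_by r) a ++ a) <= 2 * rank a)%N.
  by have := rank_cat (map (mulr_by r) a) a; have := rank_mulr_by_le Halg r a; lia.
have w_wa : (rank w <= rank (w ++ a))%N by apply/rank_le/subspan_catl.
(* For the left-hand rank F: (2m+2) F <= (2m+3) rank w + (4m+4) rank a,
   and (4m+4) rank a <= rank w by the choice of the lower bound above. *)
by nia.
Qed.

End Folner.

Lemma dist_le_of_folner (T : numFieldType) (F rho m : nat) (eps : T) :
  (rho <= F)%N -> (m.+1 * F <= m.+2 * rho)%N -> 1 <= eps * m.+1%:R ->
  `|F%:R - rho%:R| <= eps * rho%:R.
Proof.
move=> rhoF folF eps_m; rewrite -natrB // ger0_norm ?ler0n //.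
have defect : (m.+1 * (F - rho) <= rho)%N by rewrite mulnBr; lia.
rewrite -(ler_pM2l (ltr0Sn T m)); apply: le_trans (_ : rho%:R <= _).
  by rewrite -natrM ler_nat.
by rewrite mulrA [_ * eps]mulrC ler_peMl.
Qed.

Section FolnerExhaustion.
Variables (K : fieldType) (R : lmodType K) (mul : R -> R -> R) (g : seq R).
Hypotheses (Halg : is_algebra_mul mul) (gen : forall x, in_subalg mul g x).
Hypothesis Hfol : forall rs a m, exists2 w, subspan a w & folner mul rs m w.
Local Notation span := (@in_span K R).
Local Notation filt := (subalg_filt mul g).

Let fol rs a m := epsilon (inhabits [::]) (fun w => subspan a w /\ folner mul rs m w).

Let folP rs a m : subspan a (fol rs a m) /\ folner mul rs m (fol rs a m).
Proof.
have [w aw w_fol] := Hfol rs a m.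
by apply: (epsilon_spec _ (fun w => subspan a w /\ folner mul rs m w)); exists w.
Qed.

Fixpoint folner_chain n :=
  if n is n.+1 then fol (filt n.+1) (folner_chain n ++ filt n) n else [::].

Lemma amenable_of_folner : amenable mul.
Proof.
exists (fun n => span (folner_chain n)); split.
- by move=> n; exists (folner_chain n).
- by move=> n x chain_x; apply: (proj1 (folP _ _ _)); apply: subspan_catl.
- move=> x; have [n filt_x] := subalg_filt_exhaust Halg (gen x); exists n.+1.
  by apply: (proj1 (folP _ _ _)); apply: subspan_catr.
move=> r eps eps_gt0; have [N filt_r] := subalg_filt_exhaust Halg (gen r).
exists (maxn N (Num.bound eps^-1)).+1 => -[//|n]; rewrite ltnS geq_max => /andP [Nn bn].
rewrite (fdim_span (addsp_rmulsp_span Halg _ _)).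
apply: dist_le_of_folner; first exact/rank_le/subspan_catr.
  by apply: (proj2 (folP _ _ _)); apply: subalg_filt_mono (leqW Nn) _ filt_r.
rewrite -ler_pdivrMl // mulr1; apply: le_trans (ltW (archi_boundP _)) _.
  by rewrite invr_ge0 ltW.
by rewrite ler_nat (leq_trans bn).
Qed.

End FolnerExhaustion.

Theorem lemma2 (K : fieldType) (R : lmodType K) (mul : R -> R -> R)
  (Halg : is_algebra_mul mul) (Haff : affine mul)
  (Hdom : no_zero_divisors mul) (Hna : ~ amenable mul) :
  exists Z : R -> Prop, fdsub Z /\
    forall V : R -> Prop, fdsub V -> (exists v, V v /\ v <> 0) ->
      (2 : rat) < (fdim (prodsp mul V Z))%:R / (fdim V)%:R.
Proof.
apply: NNPP => no_expander; apply: Hna.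
have [g gen] := Haff.
apply: (amenable_of_folner Halg gen) => rs a m.
apply: (folner_extension Halg Hdom) => t.
apply: NNPP => expanding; apply: no_expander.
exists (in_span t); split => [|V [v Vv] [x [Vx x_neq0]]]; first by exists t.
have v_gt0 : (0 < rank v)%N by apply: (rank_gt0 (x := x)); [apply/Vv|].
rewrite (fdim_span Vv) (fdim_span (prodsp_span Halg t Vv)) ltr_pdivlMr ?ltr0n //.
rewrite -natrM ltr_nat ltnNge; apply/negP => small; apply: expanding.
by exists v => //; exists x => //; apply/Vv.
Qed.
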